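(* Let $k\ge1$ and $n\ge1$ be integers. Then $$\sum_{j=0}^{n-1}\binom{n+k-2}{n-j-1}x^{k+j}F^{(k)}_{(k-1)j}(x)=xF^{(k)}_{kn-1}(x)=\sum_{j=0}^{n}\binom{n-1}{n-j}x^{j}F^{(k)}_{(k-1)j}(x).$$
   Context: Binomial coefficients: for integers $m\ge 0$ and $j$, $\binom{m}{j}$ is the usual binomial coefficient, with $\binom{m}{j}=0$ if $j<0$ or $j>m$. For an integer $k\ge1$, the generalized Fibonacci polynomials $F^{(k)}_n(x)\in\mathbb{Z}[x]$ ($n\ge0$) are defined by $F^{(k)}_n(x)=x^n$ for $0\le n<k$ and $F^{(k)}_n(x)=xF^{(k)}_{n-1}(x)+F^{(k)}_{n-k}(x)$ for $n\ge k$. *)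

From HB Require Import structures.
From mathcomp Require Import all_boot all_order all_algebra.
Set Implicit Arguments. Unset Strict Implicit. Unset Printing Implicit Defensive.
Import GRing.Theory.
Local Open Scope ring_scope.

(* Generalized Fibonacci polynomials F^(k)_n(x) in Z[x]:
   F_n = x^n for 0 <= n < k, F_n = x F_{n-1} + F_{n-k} for n >= k.
   fibs k m is the list [F_0; ...; F_{m-1}] (built by appending). *)
Fixpoint fibs (k : nat) (m : nat) : seq {poly int} :=
  match m with
  | 0%N => [::]
  | m'.+1 =>
      let s := fibs k m' in
      rcons s (if (m' < k)%N then 'X^m'
               else 'X * nth 0 s m'.-1 + nth 0 s (m' - k))
  end.

Definition genFib (k n : nat) : {poly int} := nth 0 (fibs k n.+1) n.

From HB Require Import structures.
From mathcomp Require Import all_boot all_order all_algebra.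
From mathcomp Require Import zify.
Import GRing.Theory.
Local Open Scope ring_scope.

(* Both sides of the theorem are instances of
   the binomial sums  S_a(n, m) = sum_(j <= n) C(a, n - j) x^j F_(m + (k-1) j).
   Splitting off j = 0 and Pascal's rule in a give two recurrences for S;
   together with F_(m+k) = x F_(m+k-1) + F_m they show S_n(n, r) = F_(nk + r),
   and more generally x^c S_(n+c)(n, s) = F_(nk + c + s) whenever c + s < k,
   by induction on n and then c.  The first identity is x times the case
   (n - 1, c, s) = (n - 1, k - 1, 0); the right-hand sum is S_(n-1)(n, 0),
   whose j = 0 term vanishes, leaving x S_(n-1)(n - 1, k - 1). *)

Lemma size_fibs k m : size (fibs k m) = m.
Proof. by elim: m => //= m IH; rewrite size_rcons IH. Qed.

Lemma nth_fibs k m i : (i < m)%N -> nth 0 (fibs k m) i = genFib k i.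
Proof.
elim: m => // m IH lt_im /=; rewrite nth_rcons size_fibs.
case: (ltnP i m) => [/IH // | le_mi].
have -> : i = m by lia.
by rewrite eqxx /genFib /= nth_rcons size_fibs ltnn eqxx.
Qed.

Lemma genFib_small k m : (m < k)%N -> genFib k m = 'X^m.
Proof. by move=> lt_mk; rewrite /genFib /= nth_rcons size_fibs ltnn eqxx lt_mk. Qed.

Lemma genFibD kp m :
  genFib kp.+1 (m + kp.+1) = 'X * genFib kp.+1 (m + kp) + genFib kp.+1 m.
Proof.
rewrite /genFib [in LHS]/= nth_rcons size_fibs ltnn eqxx.
have -> : (m + kp.+1 < kp.+1)%N = false by lia.
rewrite !nth_fibs; try lia.
by do 2 f_equal; [f_equal; lia | lia].
Qed.

Section BinomialFibonacciSums.

Variable kp : nat.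
Local Notation F := (genFib kp.+1).

Definition binFibSum a n m : {poly int} :=
  \sum_(j < n.+1) ('C(a, n - j))%:R * 'X^j * F (m + kp * j).

Lemma binFibSum0 a m : binFibSum a 0 m = F m.
Proof.
by rewrite /binFibSum big_ord_recl big_ord0 bin0 expr0 !mul1r muln0 addn0 addr0.
Qed.

Lemma binFibSumS a n m :
  binFibSum a n.+1 m = ('C(a, n.+1))%:R * F m + 'X * binFibSum a n (m + kp).
Proof.
rewrite /binFibSum big_ord_recl /= subn0 muln0 addn0 mulr1 mulr_sumr.
congr (_ + _); apply: eq_bigr => j _ /=.
by rewrite subSS exprS mulnS addnA !mulrA [_ * 'X]mulrC.
Qed.

Lemma binFibSum_Pascal a n m :
  binFibSum a.+1 n.+1 m = binFibSum a n.+1 m + binFibSum a n m.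
Proof.
rewrite /binFibSum big_ord_recr [in X in _ = X + _]big_ord_recr /= subnn !bin0.
rewrite addrAC -big_split; congr (_ + _); apply: eq_bigr => -[j /= lt_jn1] _.
by rewrite subSn // binS natrD !mulrDl.
Qed.

Lemma binFibSum_diag n r : binFibSum n n r = F (n * kp.+1 + r).
Proof.
elim: n r => [|n IH] r; first by rewrite binFibSum0.
rewrite binFibSum_Pascal binFibSumS bin_small // mul0r add0r !IH.
have -> : (n.+1 * kp.+1 + r = n * kp.+1 + r + kp.+1)%N by lia.
by rewrite genFibD addnA.
Qed.

Lemma binFibSum_shift n c s : (c + s <= kp)%N ->
  'X^c * binFibSum (n + c) n s = F (n * kp.+1 + (c + s)).
Proof.
elim: n c s => [|n IHn] c s le_cs_kp.
  by rewrite binFibSum0 mul0n add0n !genFib_small ?exprD //; lia.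
elim: c s le_cs_kp => [|c IHc] s le_cs_kp; first by rewrite mul1r addn0 binFibSum_diag.
have -> : (n.+1 + c.+1 = (n.+1 + c).+1)%N by lia.
rewrite binFibSum_Pascal mulrDr exprS -mulrA IHc; last by lia.
have -> : (n.+1 + c = n + c.+1)%N by lia.
rewrite -exprS IHn; last by lia.
have -> : (n.+1 * kp.+1 + (c.+1 + s) = n * kp.+1 + (c.+1 + s) + kp.+1)%N by lia.
by rewrite genFibD; congr (_ * F _ + _); lia.
Qed.

End BinomialFibonacciSums.

Theorem mainTheorem16 (k n : nat) : (1 <= k)%N -> (1 <= n)%N ->
  (\sum_(0 <= j < n) ('C(n + k - 2, n - j - 1))%:R * 'X^(k + j) * genFib k ((k - 1) * j)
     = 'X * genFib k (k * n - 1))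
  /\
  ('X * genFib k (k * n - 1)
     = \sum_(0 <= j < n.+1) ('C(n - 1, n - j))%:R * 'X^j * genFib k ((k - 1) * j)).
Proof.
case: k => // kp _; case: n => // np _.
have -> : (kp.+1 * np.+1 - 1 = np * kp.+1 + (kp + 0))%N by lia.
split.
- rewrite big_mkord -(@binFibSum_shift kp np kp 0) ?addn0 //.
  rewrite mulrA -exprS /binFibSum mulr_sumr; apply: eq_bigr => j _.
  have -> : (np.+1 + kp.+1 - 2 = np + kp)%N by lia.
  have -> : (np.+1 - j - 1 = np - j)%N by lia.
  by rewrite add0n exprD subSS subn0 !mulrA [_%:R * _]mulrC.
- have -> : \sum_(0 <= j < np.+2)
      ('C(np.+1 - 1, np.+1 - j))%:R * 'X^j * genFib kp.+1 ((kp.+1 - 1) * j)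
    = binFibSum kp np np.+1 0.
    by rewrite big_mkord; apply: eq_bigr => j _; rewrite add0n !subSS !subn0.
  by rewrite binFibSumS bin_small // mul0r add0r add0n addn0 binFibSum_diag.
Qed.
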